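(* Let $\mathcal{F}=\{B_1,\dots,B_t\}$ be a $(G,[k_1,\dots,k_t],\lambda)$ Hadamard partitioned difference family, assume $G$ has a subgroup $H$ of index $2$, and set $s_i=|B_i\cap H|$ for $i=1,\dots,t$. Then $$s_1+\cdots+s_t=\lambda\qquad\text{and}\qquad 2s_1(k_1-s_1)+\cdots+2s_t(k_t-s_t)=\lambda^2.$$
   Context: $G$ is a finite group written additively, with difference $x-y:=x+(-y)$. For $B\subseteq G$, $\Delta B$ is the multiset $\{x-y: x,y\in B, x\neq y\}$; for $\mathcal{F}=\{B_1,\dots,B_t\}$, $\Delta\mathcal{F}$ is the multiset union of the $\Delta B_i$. $\mathcal{F}$ is a $(G,[k_1,\dots,k_t],\lambda)$ partitioned difference family if the $B_i$ partition $G$, $|B_i|=k_i$, and $\Delta\mathcal{F}$ contains every non-zero element of $G$ exactly $\lambda$ times; it is Hadamard if $|G|=2\lambda$. *)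

(* The finite group G is a (possibly non-abelian) finite group;
   we use MathComp's multiplicative finGroupType, so the paper's additive
   difference x - y = x + (-y) is rendered as x * y^-1. *)
From mathcomp Require Import all_boot all_order all_fingroup.
Set Implicit Arguments. Unset Strict Implicit. Unset Printing Implicit Defensive.
Local Open Scope group_scope.

(* Multiplicity of g in the multiset Delta F = union of Delta B_i,
   Delta B = { x - y : x,y in B, x <> y }. *)
Definition diff_mult (gT : finGroupType) (t : nat) (B : 'I_t -> {set gT}) (g : gT) : nat :=
  (\sum_(i < t) #|[set p in setX (B i) (B i) | (p.1 != p.2) && ((p.1 * p.2^-1)%g == g)]|)%N.

Definition is_PDF (gT : finGroupType) (G : {group gT}) (t : nat)
    (B : 'I_t -> {set gT}) (k : 'I_t -> nat) (lambda : nat) : Prop :=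
  [/\ (forall i j, i != j -> [disjoint B i & B j]),
      \bigcup_(i < t) B i = G,
      (forall i, #|B i| = k i) &
      (forall g, g \in G -> g != 1%g -> diff_mult B g = lambda)].

Definition is_Hadamard_PDF (gT : finGroupType) (G : {group gT}) (t : nat)
    (B : 'I_t -> {set gT}) (k : 'I_t -> nat) (lambda : nat) : Prop :=
  is_PDF G B k lambda /\ #|G| = (2 * lambda)%N.

(* Since H has index 2 in G, a quotient x y^-1 of elements of G lies outside H
   exactly when one of x, y lies in H and the other does not.  As the B_i
   partition G, the s_i add up to |H| = |G|/2 = lambda.  Counting in two ways
   the ordered pairs of elements of a common block whose quotient lies in
   G \ H: each of the lambda elements of G \ H arises lambda times, while the
   block B_i contributes the 2 s_i (k_i - s_i) pairs with exactly one entry in H. *)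
From mathcomp Require Import all_boot all_order all_fingroup.
Set Implicit Arguments. Unset Strict Implicit. Unset Printing Implicit Defensive.

Lemma sum_card_setI_disjoint (T I : finType) (B : I -> {set T}) (A : {set T}) :
  (forall i j, i != j -> [disjoint B i & B j]) -> A \subset \bigcup_i B i ->
  (\sum_i #|B i :&: A| = #|A|)%N.
Proof.
move=> disjB sAB.
have -> : (\sum_i #|B i :&: A| = \sum_i \sum_(x in A) (x \in B i))%N.
  apply: eq_bigr => i _; rewrite -sum1_card big_mkcond [RHS]big_mkcond.
  by apply: eq_bigr => x _; rewrite inE; case: (x \in A); case: (x \in B i).
rewrite -sum1_card exchange_big /=; apply: eq_bigr => x Ax.
have /bigcupP[i _ Bix] := subsetP sAB x Ax.
rewrite (bigD1 i) //= Bix big1 // => j neji.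
by rewrite (disjointFr (disjB i j _) Bix) // eq_sym.
Qed.

Lemma card_set_preim_sum (T U : finType) (A : {set T}) (P : pred T)
    (f : T -> U) (D : {set U}) :
  #|[set x in A | P x && (f x \in D)]| =
  (\sum_(y in D) #|[set x in A | P x && (f x == y)]|)%N.
Proof.
rewrite -sum1_card (partition_big f (fun y => y \in D)); last first.
  by move=> x; rewrite inE; case/and3P.
apply: eq_bigr => y Dy; rewrite -sum1_card; apply: eq_bigl => x.
by rewrite !inE; case: (f x =P y) => [-> | _]; rewrite ?Dy ?andbT ?andbF.
Qed.

Lemma sum_diff_mult (gT : finGroupType) (t : nat) (B : 'I_t -> {set gT})
    (D : {set gT}) :
  (\sum_(g in D) diff_mult B g =
   \sum_(i < t) #|[set p in setX (B i) (B i) |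
                   (p.1 != p.2) && ((p.1 * p.2^-1)%g \in D)]|)%N.
Proof.
rewrite exchange_big /=; apply: eq_bigr => i _.
by rewrite (card_set_preim_sum _ _ (fun p : gT * gT => (p.1 * p.2^-1)%g)).
Qed.

Section IndexTwo.

Local Open Scope group_scope.

Variables (gT : finGroupType) (G H : {group gT}).
Hypotheses (sHG : H \subset G) (iHG : #|G : H| = 2).

Lemma index2_mem_mulV x y :
  x \in G -> y \in G -> (x * y^-1 \in H) = ((x \in H) == (y \in H)).
Proof.
move=> Gx Gy; case Hx: (x \in H); case Hy: (y \in H) => /=.
- by rewrite groupM ?groupV.
- by rewrite groupMl // groupV Hy.
- by rewrite groupMr ?groupV // Hx.
rewrite -mem_rcoset (rcoset_index2 sHG iHG) //; last by rewrite inE Hy.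
by rewrite inE Hx.
Qed.

Lemma card_pairs_mulV_notin_index2 (A : {set gT}) :
  A \subset G ->
  #|[set p in setX A A | (p.1 != p.2) && (p.1 * p.2^-1 \in G :\: H)]| =
  (2 * #|A :&: H| * #|A :\: H|)%N.
Proof.
move=> sAG.
have -> : [set p in setX A A | (p.1 != p.2) && (p.1 * p.2^-1 \in G :\: H)] =
          setX (A :&: H) (A :\: H) :|: setX (A :\: H) (A :&: H).
  apply/setP => [[x y]]; rewrite !inE /=.
  case Ax: (x \in A); case Ay: (y \in A); rewrite ?andbF //=.
  have [Gx Gy] := (subsetP sAG x Ax, subsetP sAG y Ay).
  rewrite index2_mem_mulV // groupM ?groupV // andbT.
  by case: eqP => [-> | _]; case: (x \in H); case: (y \in H).
have cross0 : setX (A :&: H) (A :\: H) :&: setX (A :\: H) (A :&: H) = set0.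
  by apply/setP => [[x y]]; rewrite !inE /=; case: (x \in H); rewrite ?andbF.
rewrite cardsU cross0 cards0 subn0 !cardsX [(#|A :\: H| * _)%N]mulnC.
by rewrite -mulnA mul2n -addnn.
Qed.

End IndexTwo.

Theorem proposition5p1 (gT : finGroupType) (G H : {group gT}) (t : nat)
    (B : 'I_t -> {set gT}) (k : 'I_t -> nat) (lambda : nat) :
  is_Hadamard_PDF G B k lambda ->
  H \subset G -> #|G : H|%g = 2 ->
  (\sum_(i < t) #|B i :&: H| = lambda)%N /\
  (\sum_(i < t) 2 * #|B i :&: H| * (k i - #|B i :&: H|) = lambda ^ 2)%N.
Proof.
move=> [[disjB coverB cardB diffB] cardG] sHG iHG.
have cardH : #|H| = lambda.
  by apply/eqP; have /eqP := Lagrange sHG; rewrite iHG cardG mulnC eqn_pmul2l.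
have cardGH : #|G :\: H| = lambda.
  by rewrite cardsD (setIidPr sHG) cardG cardH mul2n -addnn addnK.
split; first by rewrite -cardH sum_card_setI_disjoint // coverB.
have -> : lambda ^ 2 = (\sum_(g in G :\: H) diff_mult B g)%N.
  rewrite (eq_bigr (fun _ => lambda)) => [|g /setDP[Gg Hg]].
    by rewrite sum_nat_const cardGH.
  by apply: diffB => //; apply: contraNneq Hg => ->; apply: group1.
rewrite sum_diff_mult; apply: eq_bigr => i _.
have sBG : B i \subset G by rewrite -coverB (bigcup_sup i).
by rewrite card_pairs_mulV_notin_index2 // cardsD cardB.
Qed.
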